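(* The scalar curvature $\mathrm{Sc}(C\Gamma)$ of the generalized Cartan canonical connection $C\Gamma(N)$ of the space $\mathcal{ED}MH_m^n$, computed with respect to the adapted metric $\mathbb{G}=h^*_{ab}dt^a\otimes dt^b+\varphi_{ij}dx^i\otimes dx^j+h^*_{ab}\varphi^{ij}\delta p_i^a\otimes\delta p_j^b$, has the expression $$\mathrm{Sc}(C\Gamma)=(4mc)\cdot\chi+\mathfrak{R},$$ where $\chi=h^{ab}\chi_{ab}$ and $\mathfrak{R}=\varphi^{ij}\mathfrak{R}_{ij}$ are the classical scalar curvatures of the metrics $h_{ab}(t)$ and $\varphi_{ij}(x)$.
   Context: Let $(\mathcal{T}^m,h_{ab}(t))$ be a Riemannian manifold with coordinates $(t^a)$ and $M^n$ a manifold with coordinates $(x^i)$ carrying a semi-Riemannian metric $\varphi_{ij}(x)$; let $m\neq0$ (mass), $e$ (charge), $c$ (speed of light), $A^{(a)}_{(i)}(t,x)$ a d-tensor and $\mathcal{P}(t,x)$ a smooth function. On the dual 1-jet space $E^*=J^{1*}(\mathcal{T},M)$ with coordinates $(t^a,x^i,p^a_i)$ consider the Hamiltonian $H=\frac{1}{4mc}h_{ab}\varphi^{ij}p^a_ip^b_j-\frac{e}{m^2c}h_{ab}\varphi^{ij}A^{(b)}_{(j)}p^a_i+\frac{e^2}{m^3c}h_{ab}\varphi^{ij}A^{(a)}_{(i)}A^{(b)}_{(j)}-\mathcal{P}$; the pair $(E^*,H)$ is the space $\mathcal{ED}MH_m^n$. Its fundamental vertical metrical d-tensor is $\frac12\partial^2H/\partial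 p^a_i\partial p^b_j=h^*_{ab}\varphi^{ij}$ with $h^*_{ab}=(4mc)^{-1}h_{ab}$. Let $\chi^a_{bc}$, $\gamma^k_{ij}$ be the Christoffel symbols of $h_{ab}$, $\varphi_{ij}$. The canonical nonlinear connection is $N^{(a)}_{1\,(i)b}=\chi^a_{bf}p^f_i$, $N^{(a)}_{2\,(i)j}=\gamma^r_{ij}[\frac{2e}{m}A^{(a)}_{(r)}-p^a_r]-\frac{e}{m}[\partial A^{(a)}_{(i)}/\partial x^j+\partial A^{(a)}_{(j)}/\partial x^i]$, with adapted cobasis $\{dt^a,dx^i,\delta p^a_i=dp^a_i+N^{(a)}_{1\,(i)f}dt^f+N^{(a)}_{2\,(i)r}dx^r\}$. The generalized Cartan canonical connection is $C\Gamma(N)=(\chi^a_{bc},0,\gamma^i_{jk},0)$, whose Ricci tensor has exactly two effective local Ricci d-tensors $\chi_{ab}=\chi^f_{abf}$ and $\mathfrak{R}_{ij}=\mathfrak{R}^r_{ijr}$, the classical Ricci tensors of $h_{ab}$ and $\varphi_{ij}$ (with $\chi^d_{abc}$, $\mathfrak{R}^l_{ijk}$ their curvature tensors). *)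

From HB Require Import structures.
From mathcomp Require Import all_boot all_order all_algebra.
From mathcomp Require Import all_classical all_reals all_analysis.
Set Implicit Arguments. Unset Strict Implicit. Unset Printing Implicit Defensive.
Import Order.TTheory GRing.Theory Num.Theory.
Import numFieldNormedType.Exports.
Local Open Scope ring_scope.

Section Defs.
Variable R : realType.

Definition pder {m : nat} (f : 'rV[R]_m -> R) (k : 'I_m) (y : 'rV[R]_m) : R :=
  derive f y (delta_mx 0 k).

Definition christoffel {m : nat} (g : 'rV[R]_m -> 'M[R]_m) (y : 'rV[R]_m)
  (a b c : 'I_m) : R :=
  2^-1 * \sum_(d < m) (invmx (g y)) a d *
    (pder (fun z => g z d c) b y + pder (fun z => g z d b) c y
     - pder (fun z => g z b c) d y).

(* curvature tensor R^l_{ijk} (Miron-Anastasiei convention) *)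
Definition riemann {m : nat} (g : 'rV[R]_m -> 'M[R]_m) (y : 'rV[R]_m)
  (l i j k : 'I_m) : R :=
  pder (fun z => christoffel g z l i j) k y - pder (fun z => christoffel g z l i k) j y
  + \sum_(r < m) (christoffel g y r i j * christoffel g y l r k
                  - christoffel g y r i k * christoffel g y l r j).

Definition ricci {m : nat} (g : 'rV[R]_m -> 'M[R]_m) (y : 'rV[R]_m) (i j : 'I_m) : R :=
  \sum_(r < m) riemann g y r i j r.

Definition scalar_curv {m : nat} (g : 'rV[R]_m -> 'M[R]_m) (y : 'rV[R]_m) : R :=
  \sum_(i < m) \sum_(j < m) (invmx (g y)) i j * ricci g y i j.

(* indices of the adapted frame on E* = J^{1*}(T,M): (a) for dt^a, (i) for dx^i,
   (a,i) for delta p^a_i *)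
Definition eidx (m n : nat) : finType := ('I_m + 'I_n + 'I_m * 'I_n)%type.

Definition mat_of (I : finType) (f : I -> I -> R) : 'M[R]_#|I| :=
  \matrix_(u, v) f (enum_val u) (enum_val v).

Definition hstar {m : nat} (mass c : R) (h : 'rV[R]_m -> 'M[R]_m) (t : 'rV[R]_m)
  (a b : 'I_m) : R := (4 * mass * c)^-1 * h t a b.

Definition adaptedG {m n : nat} (mass c : R) (h : 'rV[R]_m -> 'M[R]_m)
  (phi : 'rV[R]_n -> 'M[R]_n) (t : 'rV[R]_m) (x : 'rV[R]_n)
  (A B : eidx m n) : R :=
  match A, B with
  | inl (inl a), inl (inl b) => hstar mass c h t a b
  | inl (inr i), inl (inr j) => phi x i j
  | inr (a, i), inr (b, j) => hstar mass c h t a b * (invmx (phi x)) i j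
  | _, _ => 0
  end.

(* Ricci tensor of C Gamma(N) in the adapted frame: its only effective local
   Ricci d-tensors are chi_{ab} (the Ricci tensor of h) and R_{ij} (of phi) *)
Definition ricciCGamma {m n : nat} (h : 'rV[R]_m -> 'M[R]_m)
  (phi : 'rV[R]_n -> 'M[R]_n) (t : 'rV[R]_m) (x : 'rV[R]_n)
  (A B : eidx m n) : R :=
  match A, B with
  | inl (inl a), inl (inl b) => ricci h t a b
  | inl (inr i), inl (inr j) => ricci phi x i j
  | _, _ => 0
  end.

Definition scCGamma {m n : nat} (mass c : R) (h : 'rV[R]_m -> 'M[R]_m)
  (phi : 'rV[R]_n -> 'M[R]_n) (t : 'rV[R]_m) (x : 'rV[R]_n) : R :=
  let G := mat_of (adaptedG mass c h phi t x) in
  \sum_(u < #|eidx m n|) \sum_(v < #|eidx m n|)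
     (invmx G) u v * ricciCGamma h phi t x (enum_val u) (enum_val v).

End Defs.

(* The adapted metric G is block diagonal, with blocks h*, phi and h* (x) phi^-1, so its
   inverse is block diagonal with blocks (4mc) h^-1, phi^-1 and (4mc) h^-1 (x) phi.  The
   Ricci tensor of C Gamma(N) lives on the two horizontal blocks only, so contracting it
   with G^-1 leaves (4mc) h^{ab} chi_{ab} + phi^{ij} R_{ij}. *)
From HB Require Import structures.
From mathcomp Require Import all_boot all_order all_algebra.
From mathcomp Require Import all_classical all_reals all_analysis.
From mathcomp Require Import ring.
Set Implicit Arguments. Unset Strict Implicit. Unset Printing Implicit Defensive.
Import Order.TTheory GRing.Theory Num.Theory.
Import numFieldNormedType.Exports.
Local Open Scope ring_scope.

Section Metric.
Variable R : realType.

Lemma sum_mulmxV k (M : 'M[R]_k) (Mu : M \in unitmx) i j :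
  \sum_d M i d * invmx M d j = (i == j)%:R.
Proof. by have := congr1 (fun N : 'M[R]_k => N i j) (mulmxV Mu); rewrite !mxE. Qed.

Lemma sum_mulVmx k (M : 'M[R]_k) (Mu : M \in unitmx) i j :
  \sum_d invmx M i d * M d j = (i == j)%:R.
Proof. by have := congr1 (fun N : 'M[R]_k => N i j) (mulVmx Mu); rewrite !mxE. Qed.

Lemma posdef_unitmx k (M : 'M[R]_k) :
  (forall v : 'rV[R]_k, v != 0 -> 0 < (v *m M *m v^T) 0 0) -> M \in unitmx.
Proof.
move=> Mpos; rewrite unitmxE unitfE; apply/negP => /det0P [v v0 vM].
by have := Mpos v v0; rewrite vM mul0mx mxE ltxx.
Qed.

Lemma mat_ofM (I : finType) (f g : I -> I -> R) :
  mat_of f *m mat_of g = mat_of (fun A B => \sum_C f A C * g C B).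
Proof.
apply/matrixP => u v; rewrite !mxE.
under eq_bigr do rewrite !mxE.
by rewrite -(big_enum_val (fun C : I => f (enum_val u) C * g C (enum_val v))).
Qed.

Lemma invmx_mat_of (I : finType) (f g : I -> I -> R) :
  (forall A B, \sum_C f A C * g C B = (A == B)%:R) -> invmx (mat_of f) = mat_of g.
Proof.
move=> fg; have fg1 : mat_of f *m mat_of g = 1%:M.
  by rewrite mat_ofM; apply/matrixP => u v; rewrite !mxE fg (inj_eq enum_val_inj).
have [fu _] := mulmx1_unit fg1.
by rewrite -[RHS](mulKmx fu) fg1 mulmx1.
Qed.

Lemma sum_mul0l (I : Type) (r : seq I) (F : I -> R) : \sum_(i <- r) 0 * F i = 0.
Proof. by rewrite -mulr_sumr mul0r. Qed.

Lemma sum_mulr0 (I : Type) (r : seq I) (F : I -> R) : \sum_(i <- r) F i * 0 = 0.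
Proof. by rewrite -mulr_suml mulr0. Qed.

Section BlockDiagonal.
Variables m n : nat.

Lemma sum_eidx (F : eidx m n -> R) :
  \sum_(A : eidx m n) F A = \sum_(a < m) F (inl (inl a)) + \sum_(i < n) F (inl (inr i))
    + \sum_(p : 'I_m * 'I_n) F (inr p).
Proof. by rewrite !big_sumType. Qed.

Definition eidx_blockdiag (fh : 'I_m -> 'I_m -> R) (fx : 'I_n -> 'I_n -> R)
  (fp : 'I_m * 'I_n -> 'I_m * 'I_n -> R) (A B : eidx m n) : R :=
  match A, B with
  | inl (inl a), inl (inl b) => fh a b
  | inl (inr i), inl (inr j) => fx i j
  | inr p, inr q => fp p q
  | _, _ => 0
  end.

Lemma eidx_blockdiagM fh fx fp gh gx gp A B :
  \sum_C eidx_blockdiag fh fx fp A C * eidx_blockdiag gh gx gp C B =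
  eidx_blockdiag (fun a b => \sum_d fh a d * gh d b) (fun i j => \sum_k fx i k * gx k j)
    (fun p q => \sum_r fp p r * gp r q) A B.
Proof.
by case: A B => [[a|i]|p] [[b|j]|q];
  rewrite sum_eidx /= ?sum_mul0l ?sum_mulr0 ?addr0 ?add0r.
Qed.

Lemma eidx_blockdiag_delta A B :
  eidx_blockdiag (fun a b => (a == b)%:R) (fun i j => (i == j)%:R) (fun p q => (p == q)%:R)
    A B = (A == B)%:R.
Proof. by case: A B => [[a|i]|p] [[b|j]|q]. Qed.

Lemma sum_eidx_blockdiag_mul fh fx fp gh gx gp :
  \sum_A \sum_B eidx_blockdiag fh fx fp A B * eidx_blockdiag gh gx gp A B =
  \sum_a \sum_b fh a b * gh a b + \sum_i \sum_j fx i j * gx i j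
    + \sum_p \sum_q fp p q * gp p q.
Proof.
have sum_row A : \sum_B eidx_blockdiag fh fx fp A B * eidx_blockdiag gh gx gp A B =
    match A with
    | inl (inl a) => \sum_b fh a b * gh a b
    | inl (inr i) => \sum_j fx i j * gx i j
    | inr p => \sum_q fp p q * gp p q
    end.
  by case: A => [[a|i]|p]; rewrite sum_eidx /= ?sum_mul0l ?sum_mulr0 ?addr0 ?add0r.
by under eq_bigr do rewrite sum_row; rewrite sum_eidx.
Qed.

End BlockDiagonal.

Section AdaptedMetric.
Variables (m n : nat) (mass c : R) (h : 'rV[R]_m -> 'M[R]_m) (phi : 'rV[R]_n -> 'M[R]_n).
Variables (t : 'rV[R]_m) (x : 'rV[R]_n).

Lemma adaptedG_blockdiag A B :
  adaptedG mass c h phi t x A B =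
  eidx_blockdiag (hstar mass c h t) (phi x)
    (fun p q => hstar mass c h t p.1 q.1 * invmx (phi x) p.2 q.2) A B.
Proof. by case: A B => [[a|i]|[a i]] [[b|j]|[b j]]. Qed.

Lemma ricciCGamma_blockdiag A B :
  ricciCGamma h phi t x A B = eidx_blockdiag (ricci h t) (ricci phi x) (fun _ _ => 0) A B.
Proof. by case: A B => [[a|i]|[a i]] [[b|j]|[b j]]. Qed.

Definition adaptedGinv : eidx m n -> eidx m n -> R :=
  eidx_blockdiag (fun a b => 4 * mass * c * invmx (h t) a b) (invmx (phi x))
    (fun p q => 4 * mass * c * invmx (h t) p.1 q.1 * phi x p.2 q.2).

Hypotheses (mass_neq0 : mass != 0) (c_neq0 : c != 0).
Hypotheses (ht_unit : h t \in unitmx) (phix_unit : phi x \in unitmx).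

Lemma hstar_mulr_inv a b :
  \sum_d hstar mass c h t a d * (4 * mass * c * invmx (h t) d b) = (a == b)%:R.
Proof.
rewrite -(sum_mulmxV ht_unit); apply: eq_bigr => d _; rewrite /hstar.
by field; rewrite mass_neq0 c_neq0.
Qed.

Lemma invmx_adaptedG :
  invmx (mat_of (adaptedG mass c h phi t x)) = mat_of adaptedGinv.
Proof.
apply: invmx_mat_of => A B; under eq_bigr do rewrite adaptedG_blockdiag.
rewrite eidx_blockdiagM -eidx_blockdiag_delta.
case: A B => [[a|i]|p] [[b|j]|q] //=.
- exact: hstar_mulr_inv.
- exact: sum_mulmxV.
case: p q => [a i] [b j] /=.
rewrite xpair_eqE -mulnb natrM -(hstar_mulr_inv a b) -(sum_mulVmx phix_unit).
rewrite mulr_suml; under [RHS]eq_bigr do rewrite mulr_sumr.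
by rewrite pair_big; apply: eq_bigr => -[d k] _ /=; ring.
Qed.

Lemma scCGammaE :
  scCGamma mass c h phi t x = \sum_A \sum_B adaptedGinv A B * ricciCGamma h phi t x A B.
Proof.
rewrite /scCGamma /= invmx_adaptedG.
under eq_bigr do under eq_bigr do rewrite mxE.
under eq_bigr => u _ do rewrite -(big_enum_val (fun B =>
  adaptedGinv (enum_val u) B * ricciCGamma h phi t x (enum_val u) B)).
by rewrite -(big_enum_val (fun A => \sum_B adaptedGinv A B * ricciCGamma h phi t x A B)).
Qed.

End AdaptedMetric.

End Metric.

Theorem mainTheorem1 (R : realType) (m n : nat) (mass c : R)
  (h : 'rV[R]_m -> 'M[R]_m) (phi : 'rV[R]_n -> 'M[R]_n) :
  mass != 0 -> c != 0 ->
  (forall t, (h t)^T = h t) ->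
  (forall t (v : 'rV[R]_m), v != 0 -> 0 < (v *m h t *m v^T) 0 0) ->
  (forall x, (phi x)^T = phi x) ->
  (forall x, phi x \in unitmx) ->
  forall (t : 'rV[R]_m) (x : 'rV[R]_n),
    scCGamma mass c h phi t x = (4 * mass * c) * scalar_curv h t + scalar_curv phi x.
Proof.
move=> mass_neq0 c_neq0 _ h_posdef _ phi_unit t x.
rewrite (scCGammaE mass_neq0 c_neq0 (posdef_unitmx (h_posdef t)) (phi_unit x)).
under eq_bigr do under eq_bigr do rewrite ricciCGamma_blockdiag.
rewrite sum_eidx_blockdiag_mul [X in _ + X]big1 ?addr0 => [|p _]; last exact: sum_mulr0.
rewrite /scalar_curv mulr_sumr; congr (_ + _); apply: eq_bigr => a _.
by rewrite mulr_sumr; apply: eq_bigr => b _; rewrite mulrA.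
Qed.
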